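(* Let $\alpha > 1$ and let $H$ be a $k$-uniform hypergraph with $\lambda_\alpha(H) \ge \left(k!\binom{x}{k}\right)^{1-1/\alpha}$ for some real $x \ge k-1$. Then $e(\partial H) \ge \binom{x}{k-1}$.
   Context: For real $x$, $\binom{x}{m} = x(x-1)\cdots(x-m+1)/m!$. The shadow $\partial H$ of a $k$-uniform hypergraph $H$ is the $(k-1)$-uniform hypergraph consisting of all $(k-1)$-sets contained in some edge of $H$; $e(\cdot)$ denotes number of edges. For $H$ on $[n]$, $\tau_H(x,\dots,x) = k!\sum_{\{i_1,\dots,i_k\}\in E(H)} x_{i_1}\cdots x_{i_k}$ and $\lambda_\alpha(H) = \max\{\tau_H(x,\dots,x) : \|x\|_\alpha=1\}$, where $\|x\|_\alpha = (\sum_i|x_i|^\alpha)^{1/\alpha}$. *)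

From HB Require Import structures.
From mathcomp Require Import all_boot all_order all_algebra.
From mathcomp Require Import all_classical all_reals all_analysis.
Set Implicit Arguments. Unset Strict Implicit. Unset Printing Implicit Defensive.
Import Order.TTheory GRing.Theory Num.Theory.
Local Open Scope ring_scope.

Definition binomr (R : realType) (x : R) (m : nat) : R :=
  (\prod_(i < m) (x - i%:R)) / (m`!)%:R.

Definition uniform (n k : nat) (E : {set {set 'I_n}}) : Prop :=
  forall e, e \in E -> #|e| = k.

Definition shadow (n k : nat) (E : {set {set 'I_n}}) : {set {set 'I_n}} :=
  [set S : {set 'I_n} | (#|S| == k.-1) && [exists e in E, S \subset e]].

(* tau_H(x,...,x) = k! * sum_{edges} prod x_i *)
Definition tauH (R : realType) (n k : nat) (E : {set {set 'I_n}}) (x : 'I_n -> R) : R :=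
  (k`!)%:R * \sum_(e in E) \prod_(i in e) x i.

Definition anorm (R : realType) (n : nat) (a : R) (x : 'I_n -> R) : R :=
  (\sum_(i < n) `|x i| `^ a) `^ a^-1.

(* lambda_alpha(H) = max { tau_H(x) : ||x||_alpha = 1 } (taken as a supremum) *)
Definition lambda_alpha (R : realType) (n k : nat) (a : R) (E : {set {set 'I_n}}) : R :=
  sup [set t : R | exists x : 'I_n -> R, anorm a x = 1 /\ t = tauH k E x].

From HB Require Import structures.
From mathcomp Require Import all_boot all_order all_algebra.
From mathcomp Require Import all_classical all_reals all_analysis.
From mathcomp Require Import ring lra.
Set Implicit Arguments. Unset Strict Implicit. Unset Printing Implicit Defensive.
Import Order.TTheory GRing.Theory Num.Theory numFieldNormedType.Exports.
Local Open Scope ring_scope.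

(* Put y_i = |x_i|^a, a point of the simplex.  Then |tau_H(x)| is at most
   k! * sum_{e in E} (prod_{i in e} y_i)^(1/a); concavity of t |-> t^(1/a)
   bounds this sum by e(H) times the power of the average, and Maclaurin's
   inequality k! e_k(y) <= (sum_i y_i)^k = 1 bounds the average.  Hence
   lambda_a(H) <= (k! e(H))^(1 - 1/a), so the hypothesis forces
   e(H) >= binom(x, k), and Lovasz's form of the Kruskal-Katona theorem gives
   e(dH) >= binom(x, k - 1).

   Lovasz's theorem is proved by induction on k.  If e(dH) < binom(x, k - 1),
   the induction hypothesis applied to the link of each vertex v yields
   (k - 1) deg_H(v) <= (x - k + 1) deg_dH(v); summing over v and double
   counting gives k e(H) <= (x - k + 1) e(dH) < k binom(x, k), a
   contradiction. *)

Section Shadow.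
Variable n : nat.
Implicit Types (G : {set {set 'I_n}}) (v : 'I_n).

Definition degree v G := #|[set e in G | v \in e]|.

Definition link v G := (fun e => e :\ v) @: [set e in G | v \in e].

Lemma card_link v G : #|link v G| = degree v G.
Proof.
apply: card_in_imset => e1 e2; rewrite !inE => /andP[_ ve1] /andP[_ ve2] e12.
by rewrite -(finset.setD1K ve1) -(finset.setD1K ve2) e12.
Qed.

Lemma link_uniform k v G : uniform k G -> uniform k.-1 (link v G).
Proof.
move=> uG S /imsetP[e]; rewrite inE => /andP[eG ve] ->.
by have := cardsD1 v e; rewrite ve (uG e eG) => ->.
Qed.

Lemma link_sub_shadow k v G : uniform k G ->
  {subset link v G <= [set S in shadow k G | v \notin S]}.
Proof.
move=> uG S SL; have /eqP cS := link_uniform (v := v) uG SL.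
case/imsetP: SL cS => e; rewrite inE => /andP[eG ve] -> cS.
rewrite !inE eqxx cS andbT /=; apply/existsP; exists e.
by rewrite eG subD1set.
Qed.

Lemma degree_link_shadow k v G : uniform k G ->
  (degree v G + degree v (shadow k G) <= #|shadow k G|)%N.
Proof.
move=> uG; rewrite -card_link.
rewrite -(cardsID [set S : {set 'I_n} | v \in S] (shadow k G)) [X in (_ <= X)%N]addnC.
rewrite leq_add //; last first.
  by apply: fintype.subset_leq_card; apply/fintype.subsetP => S; rewrite !inE.
apply: fintype.subset_leq_card; apply/fintype.subsetP => S /(link_sub_shadow uG).
by rewrite !inE andbC.
Qed.

Lemma card_shadow_link k v G : (1 < k)%N -> uniform k G ->
  (#|shadow k.-1 (link v G)| <= degree v (shadow k G))%N.
Proof.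
move=> k2 uG.
have vNT T : T \in shadow k.-1 (link v G) -> v \notin T.
  rewrite inE => /andP[_ /existsP[S /andP[SL TS]]].
  have := link_sub_shadow uG SL; rewrite inE => /andP[_].
  by apply: contra; apply: (fintype.subsetP TS).
rewrite -(@card_in_imset _ _ (fun T => v |: T)); last first.
  by move=> T1 T2 /vNT vT1 /vNT vT2 /= T12; rewrite -(setU1K vT1) -(setU1K vT2) T12.
apply: fintype.subset_leq_card; apply/fintype.subsetP => _ /imsetP[T Tsh ->].
have := Tsh; rewrite inE => /andP[/eqP cT /existsP[S /andP[SL TS]]].
rewrite inE setU11 andbT inE cardsU1 (vNT _ Tsh) cT add1n prednK ?eqxx //=; last first.
  by rewrite -ltnS prednK // ltnW.
case/imsetP: SL TS => e; rewrite inE => /andP[eG ve] -> TS.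
apply/existsP; exists e; rewrite eG finset.subUset finset.sub1set ve.
exact: fintype.subset_trans TS (subD1set _ _).
Qed.

Lemma sum_degree k G : uniform k G -> (\sum_v degree v G = k * #|G|)%N.
Proof.
move=> uG; rewrite mulnC -sum_nat_const.
have degreeE v : degree v G = (\sum_(e in G) (v \in e))%N.
  rewrite /degree -sum1_card big_mkcond [RHS]big_mkcond /=.
  by apply: eq_bigr => e _; rewrite inE; case: (e \in G); case: (v \in e).
under eq_bigr do rewrite degreeE; rewrite exchange_big /=.
apply: eq_bigr => e eG; rewrite -(uG e eG) -sum1_card [RHS]big_mkcond /=.
by apply: eq_bigr => v _; case: (v \in e).
Qed.

Lemma shadow_uniform k G : uniform k.-1 (shadow k G).
Proof. by move=> S; rewrite inE => /andP[/eqP]. Qed.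

Lemma card_shadow_gt0 k G : (0 < k)%N -> uniform k G -> (0 < #|G|)%N ->
  (0 < #|shadow k G|)%N.
Proof.
move=> k0 uG /card_gt0P[e eG].
have /card_gt0P[v ve] : (0 < #|e|)%N by rewrite (uG e eG).
apply/card_gt0P; exists (e :\ v); rewrite inE.
have := cardsD1 v e; rewrite ve (uG e eG) => ->; rewrite eqxx /=.
by apply/existsP; exists e; rewrite eG subD1set.
Qed.

End Shadow.

Section RealBinomial.
Variable R : realType.
Implicit Types x : R.

Lemma binomr0 x : binomr x 0 = 1.
Proof. by rewrite /binomr big_ord0 fact0 divr1. Qed.

Lemma binomrS x j : binomr x j.+1 = binomr x j * (x - j%:R) / j.+1%:R.
Proof.
rewrite /binomr big_ord_recr /= factS natrM.
have jfact_neq0 : (j`!)%:R != 0 :> R by rewrite pnatr_eq0 -lt0n fact_gt0.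
by field; rewrite jfact_neq0 andbT addrC natr1 pnatr_eq0.
Qed.

Lemma binomrS_shift x j : binomr x j.+1 = binomr (x - 1) j * x / j.+1%:R.
Proof.
rewrite /binomr big_ord_recl /= subr0 factS natrM.
under eq_bigr => i _ do rewrite /bump leq0n add1n -addn1 natrD opprD addrA addrAC.
have jfact_neq0 : (j`!)%:R != 0 :> R by rewrite pnatr_eq0 -lt0n fact_gt0.
by field; rewrite jfact_neq0 andbT addrC natr1 pnatr_eq0.
Qed.

Lemma binomr_pascal x j :
  binomr x j.+1 = binomr (x - 1) j.+1 + binomr (x - 1) j.
Proof.
rewrite binomrS_shift binomrS -natr1.
have j1_neq0 : j%:R + 1 != 0 :> R by rewrite natr1.
by field.
Qed.

Lemma binomr_ge0 x j : j.-1%:R <= x -> 0 <= binomr x j.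
Proof.
move=> hx; rewrite divr_ge0 // prodr_ge0 // => i _.
rewrite subr_ge0 (le_trans _ hx) // ler_nat; case: j i hx => [[]//|j] i /= _.
by rewrite -ltnS.
Qed.

Lemma continuous_binomr j : continuous (fun x : R => binomr x j).
Proof.
have -> : (fun x : R => binomr x j) =
    horner ((\prod_(i < j) ('X - i%:R%:P)) * (j`!%:R)^-1%:P).
  apply: funext => x; rewrite /binomr hornerM hornerC horner_prod.
  by under [in RHS]eq_bigr do rewrite hornerXsubC.
exact: continuous_horner.
Qed.

Lemma binomr_ivt j x c : j%:R <= x -> 0 <= c -> c <= binomr x j.+1 ->
  exists2 z, j%:R <= z <= x & binomr z j.+1 = c.
Proof.
move=> hx c0 cb.
have [z zjx <-] : exists2 z, z \in `[j%:R, x] & binomr z j.+1 = c.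
  apply: IVT => //; first exact/continuous_subspaceT/continuous_binomr.
  by rewrite binomrS subrr mulr0 mul0r ge_min le_max c0 cb orbT.
by exists z; first by rewrite in_itv /= in zjx.
Qed.

End RealBinomial.

Section LovaszKruskalKatona.
Variables (R : realType) (n : nat).

Definition lovasz_shadow_bound j := forall (G : {set {set 'I_n}}) (x : R),
  uniform j.+1 G -> (0 < #|G|)%N -> j%:R <= x -> binomr x j.+1 <= #|G|%:R ->
  binomr x j <= #|shadow j.+1 G|%:R.

Lemma lovasz_shadow_bound0 : lovasz_shadow_bound 0.
Proof. by move=> G x uG G0 _ _; rewrite binomr0 ler1n card_shadow_gt0. Qed.

Lemma degree_shadow_ratio j (G : {set {set 'I_n}}) (x : R) (v : 'I_n) :
  lovasz_shadow_bound j -> uniform j.+2 G -> j.+1%:R <= x ->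
  #|shadow j.+2 G|%:R < binomr x j.+1 ->
  j.+1%:R * (degree v G)%:R <= (x - j.+1%:R) * (degree v (shadow j.+2 G))%:R.
Proof.
move=> IH uG hx hs.
set d := degree v G; set d' := degree v (shadow j.+2 G).
have uL : uniform j.+1 (link v G) := link_uniform (v := v) uG.
have shL : #|shadow j.+1 (link v G)|%:R <= d'%:R :> R.
  by rewrite ler_nat; apply: card_shadow_link.
have hx1 : j%:R <= x - 1 by rewrite lerBrDr natr1.
have [->|d_gt0] := posnP d; first by rewrite mulr0 mulr_ge0 // subr_ge0.
have L_gt0 : (0 < #|link v G|)%N by rewrite card_link.
(* Either the link is so large that Pascal's rule makes the shadow too large,
   or deg v = binom(z, j + 1) for some z in [j, x - 1] and the induction
   hypothesis applies to the link at z. *)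
have [hd|hd] := leP (binomr (x - 1) j.+1) d%:R.
  have hd' : binomr (x - 1) j <= d'%:R.
    by apply: le_trans shL; apply: IH; rewrite ?card_link.
  have := degree_link_shadow v uG; rewrite -/d -/d' -(ler_nat R) natrD.
  by rewrite leNgt (lt_le_trans hs) // binomr_pascal lerD.
have [z /andP[jz zx] bz] := binomr_ivt hx1 (ler0n _ _) (ltW hd).
have hz : binomr z j <= d'%:R.
  by apply: le_trans shL; apply: IH; rewrite ?card_link ?bz.
rewrite -bz binomrS mulrC divfK ?pnatr_eq0 // mulrC.
apply: ler_pM => //.
- by rewrite subr_ge0.
- by apply: binomr_ge0; rewrite (le_trans _ jz) // ler_nat leq_pred.
- by rewrite -natr1; lra.
Qed.

Lemma lovasz_shadow_boundS j : lovasz_shadow_bound j -> lovasz_shadow_bound j.+1.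
Proof.
move=> IH G x uG G_gt0 hx hG; rewrite leNgt; apply/negP => hs.
set m := #|G| in G_gt0 hG; set s := #|shadow j.+2 G| in hs.
set t := x - j.+1%:R.
have double_count : j.+1%:R * (j.+2 * m)%:R <= t * (j.+1 * s)%:R :> R.
  rewrite -(sum_degree uG) -(sum_degree (shadow_uniform (k := j.+2) (G := G))).
  rewrite !natr_sum !mulr_sumr; apply: ler_sum => v _.
  exact: degree_shadow_ratio.
have key : j.+2%:R * m%:R <= t * s%:R.
  by move: double_count; rewrite !natrM [t * _]mulrCA ler_pM2l ?ltr0Sn.
have hb : j.+2%:R * binomr x j.+2 = binomr x j.+1 * t.
  by rewrite binomrS mulrC divfK ?pnatr_eq0.
have m_ge1 : 1 <= m%:R :> R by rewrite ler1n.
have j2_gt0 : 0 < j.+2%:R :> R by rewrite ltr0Sn.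
have [t_gt0|t_lt0|t0] := ltrgt0P t.
- have ts_lt : t * s%:R < t * binomr x j.+1 by rewrite ltr_pM2l.
  by nra.
- by move: t_lt0; rewrite /t subr_lt0 ltNge hx.
- by move: key; rewrite t0 mul0r; nra.
Qed.

Theorem lovasz_kruskal_katona j (G : {set {set 'I_n}}) (x : R) :
  uniform j.+1 G -> (0 < #|G|)%N -> j%:R <= x -> binomr x j.+1 <= #|G|%:R ->
  binomr x j <= #|shadow j.+1 G|%:R.
Proof.
move: G x; elim: j => [|j IH]; first exact: lovasz_shadow_bound0.
exact: lovasz_shadow_boundS.
Qed.

End LovaszKruskalKatona.

Section PowerInequalities.
Variable R : realType.

Lemma powR_le_tangent (u r : R) : 0 <= u -> 0 < r -> r < 1 ->
  u `^ r <= r * u + (1 - r).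
Proof.
move=> u_ge0 r_gt0 r_lt1.
have rV_gt0 : 0 < r^-1 by rewrite invr_gt0.
have qV_gt0 : 0 < (1 - r)^-1 by rewrite invr_gt0 subr_gt0.
have conj : r^-1^-1 + (1 - r)^-1^-1 = 1 by rewrite !invrK addrC subrK.
have := conjugate_powR (powR_ge0 u r) ler01 rV_gt0 qV_gt0 conj.
rewrite mulr1 -powRrM mulfV ?gt_eqF // powRr1 // powR1 mul1r !invrK.
by rewrite mulrC.
Qed.

Lemma prodr_powR (T : finType) (A : {pred T}) (f : T -> R) (r : R) :
  (forall i, 0 <= f i) -> \prod_(i in A) f i `^ r = (\prod_(i in A) f i) `^ r.
Proof.
move=> f_ge0.
suff [] : 0 <= \prod_(i in A) f i /\
  \prod_(i in A) f i `^ r = (\prod_(i in A) f i) `^ r by [].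
apply: (big_ind2 (fun p q => 0 <= q /\ p = q `^ r)) => //.
- by rewrite powR1.
- by move=> _ q1 _ q2 [q1_ge0 ->] [q2_ge0 ->]; rewrite mulr_ge0 // powRM.
Qed.

Lemma sum_powR_le_mean (T : finType) (A : {set T}) (p : T -> R) (r : R) :
  (forall i, 0 <= p i) -> 0 < r -> r < 1 -> (0 < #|A|)%N ->
  \sum_(i in A) p i `^ r <= #|A|%:R * ((\sum_(i in A) p i) / #|A|%:R) `^ r.
Proof.
move=> p_ge0 r_gt0 r_lt1 A_gt0.
set P := \sum_(i in A) p i; set m : R := #|A|%:R.
have m_gt0 : 0 < m by rewrite ltr0n.
have [P0|P_neq0] := eqVneq P 0.
  rewrite big1 ?mulr_ge0 ?powR_ge0 // => i iA.
  by rewrite (psumr_eq0P _ P0) // powR0 // gt_eqF.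
set c := P / m.
have c_gt0 : 0 < c by rewrite divr_gt0 // lt_def P_neq0 sumr_ge0.
have c_neq0 : c != 0 by rewrite gt_eqF.
have tangent i : p i `^ r <= c `^ r * (r * (p i / c) + (1 - r)).
  have pc_ge0 : 0 <= p i / c by rewrite divr_ge0 // ltW.
  rewrite -{1}(divfK c_neq0 (p i)) powRM ?(ltW c_gt0) // mulrC.
  by rewrite ler_wpM2l ?powR_ge0 // powR_le_tangent.
apply: le_trans (ler_sum _ (fun i _ => tangent i)) _.
rewrite -mulr_sumr big_split /= -mulr_sumr -mulr_suml sumr_const -/P.
have -> : P / c = m by rewrite /c; field; rewrite P_neq0 gt_eqF.
rewrite mulrC ler_wpM2r ?powR_ge0 //.
by rewrite -[_ *+ _]mulr_natr -/m; lra.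
Qed.

Definition elemsym (T : finType) (y : T -> R) (k : nat) : R :=
  \sum_(S : {set T} | #|S| == k) \prod_(i in S) y i.

Lemma elemsymS_le (T : finType) (y : T -> R) k : (forall i, 0 <= y i) ->
  k.+1%:R * elemsym y k.+1 <= (\sum_i y i) * elemsym y k.
Proof.
move=> y_ge0; rewrite /elemsym mulr_sumr mulr_suml.
have remove_one (S : {set T}) : #|S| == k.+1 ->
    k.+1%:R * \prod_(i in S) y i = \sum_(i in S) y i * \prod_(j in S :\ i) y j.
  move=> /eqP cS; rewrite -cS mulr_natl -sumr_const; apply: eq_bigr => i iS.
  by rewrite (big_setD1 _ iS).
rewrite (eq_bigr _ remove_one) (exchange_big_dep predT) //=.
apply: ler_sum => i _; rewrite mulr_sumr.
rewrite (reindex_onto (fun S => i |: S) (fun S => S :\ i)) /=; last first.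
  by move=> S /andP[_ iS]; rewrite finset.setD1K.
rewrite big_mkcond [X in _ <= X]big_mkcond /=; apply: ler_sum => S _.
case: ifP => [/andP[/andP[cS _] /eqP SiS]|_]; last first.
  by case: ifP => // _; rewrite mulr_ge0 ?prodr_ge0.
have iNS : i \notin S by rewrite -SiS setD11.
by move: cS; rewrite SiS cardsU1 iNS add1n eqSS => ->.
Qed.

Lemma maclaurin_elemsym (T : finType) (y : T -> R) k : (forall i, 0 <= y i) ->
  k`!%:R * elemsym y k <= (\sum_i y i) ^+ k.
Proof.
move=> y_ge0; elim: k => [|k IH].
  rewrite /elemsym; under eq_bigl => S do rewrite cards_eq0.
  by rewrite big_pred1_eq big_set0 fact0 mulr1 expr0.
rewrite factS natrM [_ * k`!%:R]mulrC -mulrA exprS.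
apply: le_trans (ler_wpM2l (ler0n _ _) (elemsymS_le k y_ge0)) _.
by rewrite mulrCA ler_wpM2l ?sumr_ge0.
Qed.

End PowerInequalities.

Section LagrangianBound.
Variables (R : realType) (n : nat).

Lemma sum_edges_le_elemsym k (E : {set {set 'I_n}}) (y : 'I_n -> R) :
  uniform k E -> (forall i, 0 <= y i) ->
  \sum_(e in E) \prod_(i in e) y i <= elemsym y k.
Proof.
move=> uE y_ge0; rewrite /elemsym big_mkcond [X in _ <= X]big_mkcond /=.
apply: ler_sum => S _; case: ifP => [SE|_]; first by rewrite (uE S SE) eqxx.
by case: ifP => // _; rewrite prodr_ge0.
Qed.

Lemma anorm_sum_powR (a : R) (x : 'I_n -> R) : 0 < a -> anorm a x = 1 ->
  \sum_i `|x i| `^ a = 1.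
Proof.
move=> a_gt0 /(congr1 (fun t => t `^ a)) /=.
by rewrite -powRrM mulVf ?gt_eqF // powRr1 ?sumr_ge0 // powR1.
Qed.

Lemma tauH_le k (E : {set {set 'I_n}}) (a : R) (x : 'I_n -> R) :
  uniform k E -> (0 < #|E|)%N -> 1 < a -> anorm a x = 1 ->
  tauH k E x <= (k`!%:R * #|E|%:R) `^ (1 - a^-1).
Proof.
move=> uE E_gt0 a_gt1 x_unit.
have a_gt0 : 0 < a := lt_trans ltr01 a_gt1.
set r := a^-1.
have r_gt0 : 0 < r by rewrite invr_gt0.
have r_lt1 : r < 1 by rewrite invf_lt1.
pose y i := `|x i| `^ a.
have y_ge0 i : 0 <= y i := powR_ge0 _ _.
have absxE i : `|x i| = y i `^ r by rewrite /y -powRrM mulfV ?gt_eqF // powRr1.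
set K : R := k`!%:R; set M : R := #|E|%:R.
have K_gt0 : 0 < K by rewrite ltr0n fact_gt0.
have M_gt0 : 0 < M by rewrite ltr0n.
have KM_gt0 : 0 < K * M := mulr_gt0 K_gt0 M_gt0.
have tau_le : tauH k E x <= K * \sum_(e in E) (\prod_(i in e) y i) `^ r.
  apply: ler_wpM2l; first exact: ltW.
  apply: le_trans (ler_norm _) _; apply: le_trans (ler_norm_sum _ _ _) _.
  apply: ler_sum => e _.
  by rewrite normr_prod -prodr_powR //; under eq_bigr do rewrite absxE.
have edges_le : \sum_(e in E) \prod_(i in e) y i <= K^-1.
  rewrite -(ler_pM2l K_gt0) mulfV ?gt_eqF //.
  have := maclaurin_elemsym k y_ge0; rewrite (anorm_sum_powR a_gt0 x_unit) expr1n.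
  by apply: le_trans; rewrite ler_wpM2l ?(ltW K_gt0) // sum_edges_le_elemsym.
apply: (le_trans tau_le); rewrite powRB ?gt_eqF ?implybT // powRr1 ?(ltW KM_gt0) //.
rewrite -[_ / _]mulrA ler_wpM2l ?(ltW K_gt0) //.
have p_ge0 (e : {set 'I_n}) : 0 <= \prod_(i in e) y i by rewrite prodr_ge0.
apply: le_trans (sum_powR_le_mean p_ge0 r_gt0 r_lt1 E_gt0) _.
rewrite -/M ler_wpM2l ?(ltW M_gt0) // -powRN -mulN1r powRrM powR_inv1 ?(ltW KM_gt0) //.
apply: ge0_ler_powR; rewrite ?nnegrE ?(ltW r_gt0) ?invr_ge0 ?(ltW KM_gt0) //.
  by rewrite divr_ge0 ?sumr_ge0 ?(ltW M_gt0).
by rewrite invfM ler_wpM2r // invr_ge0 ltW.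
Qed.

Lemma lambda_alpha_le k (E : {set {set 'I_n}}) (a : R) :
  uniform k E -> (0 < #|E|)%N -> 1 < a ->
  lambda_alpha k a E <= (k`!%:R * #|E|%:R) `^ (1 - a^-1).
Proof.
move=> uE E_gt0 a_gt1; rewrite /lambda_alpha.
set A := (X in sup X).
have [->|/set0P A_neq0] := eqVneq A set0; first by rewrite sup0 powR_ge0.
by apply: ge_sup A_neq0 _ => _ [x [x_unit ->]]; exact: tauH_le.
Qed.

End LagrangianBound.

Theorem corollary6 (R : realType) (n k : nat) (E : {set {set 'I_n}})
    (a x : R) :
  (1 <= k)%N -> uniform k E -> (0 < #|E|)%N ->
  1 < a -> (k.-1)%:R <= x ->
  ((k`!)%:R * binomr x k) `^ (1 - a^-1) <= lambda_alpha k a E ->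
  binomr x k.-1 <= (#|shadow k E|)%:R.
Proof.
move=> k_gt0 uE E_gt0 a_gt1 hx hlambda.
have K_gt0 : 0 < k`!%:R :> R by rewrite ltr0n fact_gt0.
have r_gt0 : 0 < 1 - a^-1 by rewrite subr_gt0 invf_lt1 // (lt_trans ltr01).
have powR_mono := le_mono_in (gt0_ltr_powR r_gt0).
have edges_ge : binomr x k <= #|E|%:R.
  have := le_trans hlambda (lambda_alpha_le uE E_gt0 a_gt1).
  have lhs_ge0 := mulr_ge0 (ltW K_gt0) (binomr_ge0 hx).
  have rhs_ge0 := mulr_ge0 (ltW K_gt0) (ler0n R #|E|).
  by rewrite powR_mono ?nnegrE // ler_pM2l.
have := @lovasz_kruskal_katona R n k.-1 E x.
by rewrite prednK //; apply.
Qed.
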